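(* Let $M$ be a strong $r$-helix hypersurface in $E^n$ with unit normal vector field $N$ and space of helix directions $H(M)\subset\mathbb{R}^n$. Let $\alpha: I\subset\mathbb{R}\to M$ be a unit speed (arc-length parametrized) curve on $M$ with Frenet frame $\{V_1,\dots,V_n\}$. Assume that at each $q\in M$ the angle $\theta_j$ between each (unit) $d_j\in H(M)$ and $N$ satisfies $\theta_j\notin\{0,\pi/2\}$. If there exists $d_j\in H(M)$ with $d_j\in\mathrm{Sp}\{V_1,N\}$ along $\alpha$, then $\alpha$ is an asymptotic curve on $M$, i.e. $\langle N',V_1\rangle=0$ along $\alpha$.
   Context: $\langle\cdot,\cdot\rangle$ is the standard inner product on $E^n=\mathbb{R}^n$. For a hypersurface $M\subset\mathbb{R}^n$ with unit normal $N$, a vector $d$ is a helix direction of $M$ if the angle between $d$ and $T_pM$ is the same for all $p\in M$, equivalently $\langle N,d\rangle$ is constant on $M$. $H(M)$ is the set of helix directions; $M$ is a strong $r$-helix if $H(M)$ is an $r$-dimensional linear subspace. $V_1=\alpha'$ is the unit tangent of $\alpha$ (first vector of its Frenet frame). $N'$ denotes the derivative of $N|_{\alpha(s)}$ with respect to $s$. A curve on $M$ is asymptotic if $\langle N',\alpha'\rangle=0$ along it (its normal curvature vanishes). $\mathrm{Sp}\{u,v\}$ is the linear span. *)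

From HB Require Import structures.
From mathcomp Require Import all_boot all_order all_algebra.
From mathcomp Require Import all_classical all_reals all_analysis.
Set Implicit Arguments. Unset Strict Implicit. Unset Printing Implicit Defensive.
Import Order.TTheory GRing.Theory Num.Theory.
Import numFieldNormedType.Exports.
Local Open Scope ring_scope.
Local Open Scope classical_set_scope.

Section Defs.
Variables (R : realType) (n : nat).

Definition dotv (u v : 'rV[R]_n) : R := (u *m v^T) ord0 ord0.

Definition curve_derivable (c : R -> 'rV[R]_n) (t : R) : Prop :=
  forall i : 'I_n, derivable (fun s => c s ord0 i) t 1.
Definition vel (c : R -> 'rV[R]_n) (t : R) : 'rV[R]_n :=
  \row_i ((fun s => c s ord0 i)^`() t).

Definition tangent_vec (M : set 'rV[R]_n) (p v : 'rV[R]_n) : Prop :=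
  exists (g : R -> 'rV[R]_n) (t0 : R),
    (\forall t \near t0, M (g t)) /\ g t0 = p /\ curve_derivable g t0 /\
    vel g t0 = v.

(* M is a hypersurface with (smooth) unit normal field N:
   N p is a unit vector, T_pM is exactly the orthogonal complement of N p,
   and N is differentiable along differentiable curves of M. *)
Definition hypersurface_with_normal (M : set 'rV[R]_n)
    (N : 'rV[R]_n -> 'rV[R]_n) : Prop :=
  [/\ forall p, M p -> dotv (N p) (N p) = 1,
      forall p v, M p -> (tangent_vec M p v <-> dotv (N p) v = 0) &
      forall (g : R -> 'rV[R]_n) t0, (\forall t \near t0, M (g t)) ->
        curve_derivable g t0 -> curve_derivable (N \o g) t0].

Definition helix_dir (M : set 'rV[R]_n) (N : 'rV[R]_n -> 'rV[R]_n)
    (d : 'rV[R]_n) : Prop :=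
  exists c : R, forall p, M p -> dotv (N p) d = c.

Definition strong_helix (M : set 'rV[R]_n) (N : 'rV[R]_n -> 'rV[R]_n)
    (r : nat) : Prop :=
  exists U : 'M[R]_n, \rank U = r /\
    forall d : 'rV[R]_n, helix_dir M N d <-> (d <= U)%MS.

Definition angle (u v : 'rV[R]_n) : R := acos (dotv u v).

End Defs.

(* Differentiating the constant function <N(alpha s), d> gives <N', d> = 0, and
   differentiating <N, N> = 1 gives <N', N> = 0.  Writing d = a V_1 + b N, this
   leaves a <N', V_1> = 0.  If a <> 0 we are done; if a = 0 then d = +-N at one
   point, and the equality case of Cauchy-Schwarz, applied to the constant
   <N, d> = b with b^2 = 1, forces N = b d on all of M, so N' = 0. *)
From HB Require Import structures.
From mathcomp Require Import all_boot all_order all_algebra.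
From mathcomp Require Import all_classical all_reals all_analysis.
From mathcomp Require Import ring.
Set Implicit Arguments. Unset Strict Implicit. Unset Printing Implicit Defensive.
Import Order.TTheory GRing.Theory Num.Theory.
Import numFieldNormedType.Exports.
Local Open Scope ring_scope.
Local Open Scope classical_set_scope.

Section InnerProduct.
Variables (R : realType) (n : nat).
Implicit Types (u v w : 'rV[R]_n) (a : R).

Lemma dotvE u v : dotv u v = \sum_i u ord0 i * v ord0 i.
Proof. by rewrite /dotv !mxE; apply: eq_bigr => i _; rewrite mxE. Qed.

Lemma dotvC u v : dotv u v = dotv v u.
Proof. by rewrite !dotvE; apply: eq_bigr => i _; rewrite mulrC. Qed.

Lemma dotvDl u v w : dotv (u + v) w = dotv u w + dotv v w.
Proof. by rewrite /dotv mulmxDl !mxE. Qed.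

Lemma dotvBl u v w : dotv (u - v) w = dotv u w - dotv v w.
Proof. by rewrite /dotv mulmxBl !mxE. Qed.

Lemma dotvZl a u v : dotv (a *: u) v = a * dotv u v.
Proof. by rewrite /dotv -scalemxAl !mxE. Qed.

Lemma dotv0l v : dotv 0 v = 0.
Proof. by rewrite /dotv mul0mx mxE. Qed.

Lemma dotv0r v : dotv v 0 = 0.
Proof. by rewrite dotvC dotv0l. Qed.

Lemma dotv_eq0 u : dotv u u = 0 -> u = 0.
Proof.
rewrite dotvE => /psumr_eq0P u0; apply/rowP => i; rewrite mxE.
apply/eqP; rewrite -sqrf_eq0 expr2; apply/eqP/u0 => // j _.
by rewrite -expr2 sqr_ge0.
Qed.

Lemma dotv_unit_eq u v a :
  dotv u u = 1 -> dotv v v = 1 -> dotv u v = a -> a * a = 1 -> u = a *: v.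
Proof.
move=> uu vv uv aa; apply/eqP; rewrite -subr_eq0; apply/eqP/dotv_eq0.
rewrite dotvBl dotvZl (dotvC u) (dotvC v) !dotvBl !dotvZl (dotvC v u).
by rewrite uu vv uv; ring: aa.
Qed.

End InnerProduct.

Section CurveDerivative.
Variables (R : realType) (n : nat).
Implicit Types (g h : R -> 'rV[R]_n) (s : R).

Lemma is_derive_vel g s : curve_derivable g s ->
  forall i, is_derive s 1 (fun t => g t ord0 i) (vel g s ord0 i).
Proof. by move=> dg i; rewrite mxE derive1E; apply: derivableP. Qed.

Lemma is_derive_near_cst_eq0 (F : R -> R) s c df :
  is_derive s 1 F df -> (\forall t \near s, F t = c) -> df = 0.
Proof.
move=> dF Fc.
by rewrite -(@derive_val _ _ _ _ _ _ _ dF) (@near_eq_derive _ _ _ _ (cst c)) ?derive_cst.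
Qed.

Lemma vel_near_cst g s (v : 'rV[R]_n) : (\forall t \near s, g t = v) -> vel g s = 0.
Proof.
move=> gv; apply/rowP => i; rewrite !mxE derive1E.
rewrite (@near_eq_derive _ _ _ _ (cst (v ord0 i))) ?derive_cst //.
by near=> t; rewrite (near gv t).
Unshelve. all: by end_near.
Qed.

Lemma vel_cst (v : 'rV[R]_n) s : vel (cst v) s = 0.
Proof. by apply/rowP => i; rewrite !mxE; exact: derive1_cst. Qed.

Lemma curve_derivable_cst (v : 'rV[R]_n) s : curve_derivable (cst v) s.
Proof. by move=> i; exact: derivable_cst. Qed.

Lemma is_derive_dotv g h s : curve_derivable g s -> curve_derivable h s ->
  is_derive s 1 (fun t => dotv (g t) (h t))
    (dotv (vel g s) (h s) + dotv (g s) (vel h s)).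
Proof.
move=> dg dh.
have -> : (fun t => dotv (g t) (h t)) =
    \sum_i ((fun t => g t ord0 i) * (fun t => h t ord0 i)).
  by apply/funext => t; rewrite dotvE fct_sumE.
apply: is_derive_eq.
  by apply: is_derive_sum => i; apply: is_deriveM; exact: is_derive_vel.
by rewrite !dotvE -big_split /=; apply: eq_bigr => i _; rewrite /GRing.scale /=; ring.
Qed.

End CurveDerivative.

Section NormalDerivative.
Variables (R : realType) (n : nat).
Variables (M : set 'rV[R]_n) (N : 'rV[R]_n -> 'rV[R]_n).
Hypothesis hypM : hypersurface_with_normal M N.

Lemma helix_dir_normal_cst d b p0 : helix_dir M N d -> dotv d d = 1 -> M p0 ->
  d = b *: N p0 -> forall p, M p -> N p = b *: d.
Proof.
have [Nunit _ _] := hypM; move=> [c Nd] dd Mp0 dE p Mp.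
have N0d : dotv (N p0) d = b.
  by rewrite dE dotvC dotvZl Nunit // mulr1.
apply: dotv_unit_eq; rewrite ?Nunit ?Nd -?(Nd _ Mp0) //.
by move: dd; rewrite {1}dE dotvZl N0d.
Qed.

Variables (g : R -> 'rV[R]_n) (s : R).
Hypotheses (gM : \forall t \near s, M (g t)) (dg : curve_derivable g s).

Let dNg : curve_derivable (N \o g) s.
Proof. by have [_ _ dN] := hypM; exact: dN. Qed.

Lemma helix_dir_normal_vel d : helix_dir M N d -> dotv (vel (N \o g) s) d = 0.
Proof.
move=> [c Nd].
have := is_derive_dotv dNg (curve_derivable_cst (v := d) (s := s)).
rewrite vel_cst dotv0r addr0.
move/is_derive_near_cst_eq0; apply; apply: filterS gM => t Mt.
exact: Nd.
Qed.

Lemma normal_vel_orth : dotv (N (g s)) (vel (N \o g) s) = 0.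
Proof.
have [Nunit _ _] := hypM.
have twice0 : dotv (vel (N \o g) s) (N (g s)) + dotv (N (g s)) (vel (N \o g) s) = 0.
  apply: (is_derive_near_cst_eq0 (is_derive_dotv dNg dNg)).
  by apply: filterS gM => t Mt; exact: Nunit.
move: twice0; rewrite dotvC -mulr2n -mulr_natr => /eqP.
by rewrite mulf_eq0 pnatr_eq0 orbF => /eqP.
Qed.

End NormalDerivative.

Theorem theorem3p6 (R : realType) (n r : nat)
  (M : set 'rV[R]_n) (N : 'rV[R]_n -> 'rV[R]_n)
  (I : set R) (alpha : R -> 'rV[R]_n) :
  hypersurface_with_normal M N ->
  strong_helix M N r ->
  (forall d, helix_dir M N d -> dotv d d = 1 ->
     forall q, M q -> angle d (N q) <> 0 /\ angle d (N q) <> pi / 2) ->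
  is_interval I -> open I ->
  (forall s, I s -> M (alpha s)) ->
  (forall s, I s -> curve_derivable alpha s) ->
  (forall s, I s -> dotv (vel alpha s) (vel alpha s) = 1) ->
  (exists d, helix_dir M N d /\ dotv d d = 1 /\
     forall s, I s -> exists a b : R,
       d = a *: vel alpha s + b *: N (alpha s)) ->
  forall s, I s -> dotv (vel (N \o alpha) s) (vel alpha s) = 0.
Proof.
move=> hypM _ _ _ openI alphaM dalpha _ [d [hd [dd dspan]]] s Is.
have alphaM_near : \forall t \near s, M (alpha t).
  by apply: filterS (open_nbhs_nbhs (conj openI Is)); exact: alphaM.
have orth_d := helix_dir_normal_vel hypM alphaM_near (dalpha s Is) hd.
have orth_N := normal_vel_orth hypM alphaM_near (dalpha s Is).
have [a [b dE]] := dspan s Is.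
have [a0|an0] := eqVneq a 0; last first.
  move: orth_d; rewrite dE dotvC dotvDl !dotvZl orth_N mulr0 addr0.
  by move/eqP; rewrite mulf_eq0 (negPf an0) dotvC => /eqP.
rewrite (vel_near_cst (v := b *: d)) ?dotv0l //.
apply: filterS alphaM_near => t Mt.
apply: (helix_dir_normal_cst hypM hd dd (alphaM s Is)) Mt.
by rewrite dE a0 scale0r add0r.
Qed.
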